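(* Let $\mathbb{F}$ be a field and $\mathcal{C}_2 \subsetneqq \mathcal{C}_1 \subseteq \mathbb{F}^{m \times n}$ linear codes with $\ell = \dim(\mathcal{C}_1) - \dim(\mathcal{C}_2)$. Then $$0 \leq d_{M,r+1}(\mathcal{C}_1,\mathcal{C}_2) - d_{M,r}(\mathcal{C}_1,\mathcal{C}_2) \leq \min\{m,n\} \quad \text{for } 1 \leq r \leq \ell - 1,$$ and $$d_{M,r}(\mathcal{C}_1,\mathcal{C}_2) + 1 \leq d_{M,r+m}(\mathcal{C}_1,\mathcal{C}_2) \quad \text{for } 1 \leq r \leq \ell - m.$$
   Context: ${\rm Row}(V)$ is the row space. For a subspace $\mathcal{L} \subseteq \mathbb{F}^n$, $\mathcal{V}_\mathcal{L} = \{V \in \mathbb{F}^{m\times n} \mid {\rm Row}(V) \subseteq \mathcal{L}\}$, and $d_{M,r}(\mathcal{C}_1,\mathcal{C}_2) = \min\{\dim \mathcal{L} \mid \mathcal{L}\subseteq\mathbb{F}^n, \dim(\mathcal{C}_1 \cap \mathcal{V}_\mathcal{L}) - \dim(\mathcal{C}_2 \cap \mathcal{V}_\mathcal{L}) \geq r\}$. *)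

From HB Require Import structures.
From mathcomp Require Import all_boot all_order all_algebra.
From mathcomp Require Import boolp.
Set Implicit Arguments. Unset Strict Implicit. Unset Printing Implicit Defensive.
Import GRing.Theory.
Local Open Scope ring_scope.

(* V_L = { V in F^{m x n} | Row(V) <= L }, i.e. every row of V lies in L:
   the intersection over i of the preimages of L under V |-> row i V. *)
Definition VL (F : fieldType) (m n : nat) (L : {vspace 'rV[F]_n}) :
  {vspace 'M[F]_(m, n)} :=
  (\bigcap_(i < m) (linfun (row i : 'M[F]_(m, n) -> 'rV[F]_n) @^-1: L))%VS.

(* Dimensions of subspaces of F^n are at most n, so the minimum is taken over
   k < n.+1; if no such L exists the (irrelevant) value is n. *)
Definition dMr (F : fieldType) (m n : nat) (C1 C2 : {vspace 'M[F]_(m, n)})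
  (r : nat) : nat :=
  \big[minn/n]_(k < n.+1 |
     `[< exists L : {vspace 'rV[F]_n},
           \dim L = k /\
           (r <= \dim (C1 :&: VL m L) - \dim (C2 :&: VL m L))%N >]) k.

(* Write gap L for dim(C1 /\ V_L) - dim(C2 /\ V_L); when C2 <= C1 it equals
   dim(C2 + C1 /\ V_L) - dim C2, so it is monotone in L, and d_{M,r} is the
   least dim L with r <= gap L.  If gap L is not yet maximal, some V in C1
   lies outside C2 + C1 /\ V_L, and adding Row(V) to L costs at most m
   dimensions while raising the gap: hence d_{M,r+1} <= d_{M,r} + m.
   Conversely, cutting a nonzero L by a coordinate hyperplane {x_j = 0} not
   containing it lowers dim L by one, and C1 /\ V_L loses at most m
   dimensions, those of the column j of its elements: hence
   d_{M,r} < d_{M,r+m}. *)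

From HB Require Import structures.
From mathcomp Require Import all_boot all_order all_algebra.
From mathcomp Require Import boolp zify.
Set Implicit Arguments. Unset Strict Implicit. Unset Printing Implicit Defensive.
Import Order.TTheory.
Local Open Scope ring_scope.

Lemma dimv_leq_mx (F : fieldType) (p q : nat) (U : {vspace 'M[F]_(p, q)}) :
  (\dim U <= p * q)%N.
Proof. by rewrite (leq_trans (dimvS (subvf U))) // dimvf. Qed.

Section Rowspaces.
Variables (F : fieldType) (m n : nat).
Implicit Types (L : {vspace 'rV[F]_n}) (V : 'M[F]_(m, n)).

Lemma mem_VL L V : (V \in VL m L) = [forall i, row i V \in L].
Proof.
rewrite /VL memvE; apply/subv_bigcapP/forallP => [sVL i | rowsL i _].
  by have := sVL i isT; rewrite -memvE -memv_preim lfunE.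
by rewrite -memvE -memv_preim lfunE rowsL.
Qed.

Definition Row V : {vspace 'rV[F]_n} := <<[seq row i V | i <- enum 'I_m]>>%VS.

Lemma dim_Row V : (\dim (Row V) <= m)%N.
Proof. by rewrite (leq_trans (dim_span _)) // size_map size_enum_ord. Qed.

Lemma mem_VL_Row L V : (V \in VL m L) = (Row V <= L)%VS.
Proof.
rewrite mem_VL; apply/forallP/span_subvP => [rowsL _ /mapP[i _ ->] // | sRL i].
by apply: sRL; apply: map_f; rewrite mem_enum.
Qed.

Lemma VLS L L' : (L <= L')%VS -> (VL m L <= VL m L')%VS.
Proof.
by move=> sLL'; apply/subvP => V; rewrite !mem_VL_Row => /subv_trans->.
Qed.

Lemma VLf : VL m (fullv : {vspace 'rV[F]_n}) = fullv.
Proof. by apply/vspaceP => V; rewrite mem_VL_Row subvf memvf. Qed.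

Lemma VL0 : VL m (0 : {vspace 'rV[F]_n}) = 0%VS.
Proof.
apply/vspaceP => V; rewrite mem_VL memv0; apply/forallP/eqP => [rows0 | -> i].
  by apply/row_matrixP => i; rewrite row0; apply/eqP; rewrite -memv0.
by rewrite row0 mem0v.
Qed.

End Rowspaces.

Section RelativeDimension.
Variables (F : fieldType) (m n : nat) (C1 C2 : {vspace 'M[F]_(m, n)}).
Implicit Types (L : {vspace 'rV[F]_n}) (r : nat).

Definition gap L := (\dim (C1 :&: VL m L) - \dim (C2 :&: VL m L))%N.

Lemma gapf : gap fullv = (\dim C1 - \dim C2)%N.
Proof. by rewrite /gap VLf !capvf. Qed.

Lemma gap0 : gap 0 = 0%N.
Proof. by rewrite /gap VL0 !capv0 dimv0. Qed.

Lemma gapE L : (C2 <= C1)%VS ->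
  gap L = (\dim (C2 + C1 :&: VL m L) - \dim C2)%N.
Proof.
move=> sC21; have := dimv_sum_cap C2 (C1 :&: VL m L).
by rewrite capvA (capv_idPl sC21) /gap; lia.
Qed.

(* [minn] is [Order.min] on [nat] only up to conversion, so the order lemmas
   on big minima need their type given explicitly. *)
Lemma dMr_le_n r : (dMr C1 C2 r <= n)%N.
Proof. exact: (@bigmin_le_id _ nat). Qed.

Lemma dMr_le_dim r L : (r <= gap L)%N -> (dMr C1 C2 r <= \dim L)%N.
Proof.
move=> rL; have dimL : (\dim L < n.+1)%N.
  by rewrite ltnS (leq_trans (dimv_leq_mx L)) ?mul1n.
apply: (@bigmin_le_cond _ nat _ _ (Ordinal dimL) _ (fun k : 'I_n.+1 => k : nat)).
by apply/asboolP; exists L.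
Qed.

Lemma dMr_attained r : (r <= gap fullv)%N ->
  exists2 L, \dim L = dMr C1 C2 r & (r <= gap L)%N.
Proof.
move=> rf; apply: (big_ind (fun k => exists2 L, \dim L = k & (r <= gap L)%N)).
- by exists fullv; rewrite // dimvf /dim /= mul1n.
- by move=> k k' ? ?; rewrite /minn; case: ifP.
- by move=> k /asboolP[L [dimL rL]]; exists L.
Qed.

Lemma leq_dMr r s : (r <= s <= gap fullv)%N -> (dMr C1 C2 r <= dMr C1 C2 s)%N.
Proof.
case/andP=> lers lesf; have [L <- sL] := dMr_attained lesf.
exact/dMr_le_dim/(leq_trans lers).
Qed.

Lemma gap_extend L : (C2 <= C1)%VS -> (gap L < gap fullv)%N ->
  exists2 L', (\dim L' <= \dim L + m)%N & (gap L < gap L')%N.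
Proof.
move=> sC21 ltLf; set X := (C1 :&: VL m L)%VS.
have : ~~ (C1 <= C2 + X)%VS.
  by apply: contraTN ltLf => /dimvS; rewrite gapf gapE // -leqNgt; apply: leq_sub2r.
case/subvPn=> V C1V notC2XV; set L' := (L + Row V)%VS; exists L'.
  by rewrite (leq_trans (dimv_add_leqif _ _).1) // leq_add2l dim_Row.
set X' := (C1 :&: VL m L')%VS.
have sXX' : (C2 + X <= C2 + X')%VS by apply/addvS/capvS/VLS/addvSl.
have ltXX' : (\dim (C2 + X) < \dim (C2 + X'))%N.
  rewrite (ltn_leqif (dimv_leqif_eq sXX')); apply: contraNneq notC2XV => ->.
  by rewrite (subvP (addvSr _ _)) // memv_cap C1V mem_VL_Row addvSr.
have := dimvS (addvSl C2 X); rewrite !gapE // -/X -/X'; lia.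
Qed.

Lemma gap_shrink L : L != 0%VS ->
  exists2 L', (\dim L' < \dim L)%N & (gap L <= gap L' + m)%N.
Proof.
move=> nzL; have nzx : vpick L != 0 by rewrite vpick0.
have [j xj | x0] := pickP (fun j => vpick L 0 j != 0); last first.
  by case/eqP: nzx; apply/rowP => j; rewrite mxE; apply/eqP/negbFE/x0.
set h := linfun (col j : 'rV[F]_n -> 'cV[F]_1).
set g := linfun (col j : 'M[F]_(m, n) -> 'cV[F]_m).
exists (L :&: lker h)%VS.
  rewrite -(limg_ker_dim h L) -{1}[\dim _]addn0 ltn_add2l.
  rewrite lt0n dimv_eq0; apply/eqP => hL0.
  have := memv_img h (memv_pick L); rewrite hL0 memv0 lfunE /=.
  by move/eqP/colP/(_ 0); rewrite !mxE; apply/eqP.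
set X := (C1 :&: VL m L)%VS.
have sX : (X :&: lker g <= C1 :&: VL m (L :&: lker h))%VS.
  apply/subvP => V; rewrite !memv_cap memv_ker lfunE /= !mem_VL.
  case/andP=> /andP[-> /forallP rowsL] /eqP/colP gV0; apply/forallP => i.
  rewrite memv_cap rowsL memv_ker lfunE /=.
  by apply/eqP/colP => k; have := gV0 i; rewrite !mxE.
have dimX : (\dim X <= \dim (X :&: lker g) + m)%N.
  by rewrite -(limg_ker_dim g X) leq_add2l (leq_trans (dimv_leq_mx _)) ?muln1.
have := dimvS sX; have := dimvS (capvS (subvv C2) (VLS m (capvSl L (lker h)))).
rewrite /gap -/X; lia.
Qed.

Lemma dMr_succ_le r : (C2 <= C1)%VS -> (r < gap fullv)%N ->
  (dMr C1 C2 r.+1 <= dMr C1 C2 r + m)%N.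
Proof.
move=> sC21 ltrf; have [L <- rL] := dMr_attained (ltnW ltrf).
have [ltLf | lefL] := ltnP (gap L) (gap fullv).
  have [L' dimL' ltLL'] := gap_extend sC21 ltLf.
  exact/(leq_trans _ dimL')/dMr_le_dim/(leq_ltn_trans rL).
exact/(leq_trans _ (leq_addr _ _))/dMr_le_dim/(leq_trans ltrf).
Qed.

Lemma dMr_lt_addm r : (0 < r)%N -> (r + m <= gap fullv)%N ->
  (dMr C1 C2 r < dMr C1 C2 (r + m))%N.
Proof.
move=> r_gt0 rmf; have [L <- rmL] := dMr_attained rmf.
have nzL : L != 0%VS by apply: contraTneq rmL => ->; rewrite gap0 -ltnNge ltn_addr.
have [L' ltL'L leLL'] := gap_shrink nzL.
apply/(leq_ltn_trans _ ltL'L)/dMr_le_dim.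
by rewrite -(leq_add2r m) (leq_trans rmL).
Qed.

End RelativeDimension.

Theorem proposition14 (F : fieldType) (m n : nat)
  (C1 C2 : {vspace 'M[F]_(m, n)}) :
  (C2 <= C1)%VS -> C2 != C1 ->
  let l := (\dim C1 - \dim C2)%N in
  (forall r : nat, (1 <= r <= l - 1)%N ->
     (dMr C1 C2 r <= dMr C1 C2 r.+1)%N /\
     (dMr C1 C2 r.+1 - dMr C1 C2 r <= minn m n)%N) /\
  (forall r : nat, (1 <= r <= l - m)%N ->
     (dMr C1 C2 r + 1 <= dMr C1 C2 (r + m))%N).
Proof.
move=> sC21 _ l; rewrite /l -(gapf C1 C2); split=> r /andP[r_gt0 rl].
  have ltrf : (r < gap C1 C2 fullv)%N by lia.
  split; first by apply: leq_dMr; rewrite leqnSn.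
  have := dMr_succ_le sC21 ltrf; have := dMr_le_n C1 C2 r.+1.
  rewrite leq_min; lia.
by rewrite addn1; apply: dMr_lt_addm; lia.
Qed.
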